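(* Let $X$ and $Y$ be Banach spaces and let $T\in B(X)$ and $S\in B(Y)$ be compact operators that are equivalent after extension. Then there exist operators $G\in B(Y,X)$, $H\in B(X,Y)$ and a finite rank operator $R\in B(X)$ such that $T=GSH+R$.
   Context: All Banach spaces are complex; $B(X,Y)$ denotes the bounded linear operators from $X$ to $Y$, $B(X)=B(X,X)$; invertibility of an operator means it has a bounded inverse. $X\oplus Y$ denotes the $\ell^2$-direct sum and $\mathrm{id}_X$ the identity on $X$. Operators $T\in B(X)$ and $S\in B(Y)$ are called equivalent after extension if there exist Banach spaces $X'$, $Y'$ and invertible operators $E\in B(Y\oplus Y',X\oplus X')$ and $F\in B(X\oplus X',Y\oplus Y')$ with $\begin{bmatrix}T&0\\0&\mathrm{id}_{X'}\end{bmatrix}=E\begin{bmatrix}S&0\\0&\mathrm{id}_{Y'}\end{bmatrix}F$. *)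

From Stdlib Require Import Reals List.
Open Scope R_scope.
Set Implicit Arguments.

Definition C : Type := (R * R)%type.
Definition Cplus (a b : C) : C := (fst a + fst b, snd a + snd b).
Definition Cmult (a b : C) : C :=
  (fst a * fst b - snd a * snd b, fst a * snd b + snd a * fst b).
Definition C1 : C := (1, 0).
Definition Cmod (a : C) : R := sqrt (fst a ^ 2 + snd a ^ 2).

Record VNS := {
  vcar :> Type;
  vadd : vcar -> vcar -> vcar;
  vscal : C -> vcar -> vcar;
  vnorm : vcar -> R }.

Record Banach := {
  bvns :> VNS;
  bzero : bvns;
  bopp : bvns -> bvns;
  b_add_assoc : forall x y z : bvns, vadd _ x (vadd _ y z) = vadd _ (vadd _ x y) z;
  b_add_comm : forall x y : bvns, vadd _ x y = vadd _ y x;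
  b_add_zero : forall x : bvns, vadd _ x bzero = x;
  b_add_opp : forall x : bvns, vadd _ x (bopp x) = bzero;
  b_scal_one : forall x : bvns, vscal _ C1 x = x;
  b_scal_assoc : forall (a b : C) (x : bvns), vscal _ a (vscal _ b x) = vscal _ (Cmult a b) x;
  b_scal_distr_l : forall (a : C) (x y : bvns), vscal _ a (vadd _ x y) = vadd _ (vscal _ a x) (vscal _ a y);
  b_scal_distr_r : forall (a b : C) (x : bvns), vscal _ (Cplus a b) x = vadd _ (vscal _ a x) (vscal _ b x);
  b_norm_nonneg : forall x : bvns, 0 <= vnorm _ x;
  b_norm_sep : forall x : bvns, vnorm _ x = 0 -> x = bzero;
  b_norm_scal : forall (a : C) (x : bvns), vnorm _ (vscal _ a x) = Cmod a * vnorm _ x;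
  b_norm_triangle : forall x y : bvns, vnorm _ (vadd _ x y) <= vnorm _ x + vnorm _ y;
  b_complete : forall u : nat -> bvns,
    (forall eps, eps > 0 -> exists N, forall n m, (n >= N)%nat -> (m >= N)%nat ->
        vnorm _ (vadd _ (u n) (bopp (u m))) < eps) ->
    exists l : bvns, forall eps, eps > 0 -> exists N, forall n, (n >= N)%nat ->
        vnorm _ (vadd _ (u n) (bopp l)) < eps }.

Definition dist {X : Banach} (x y : X) : R := vnorm _ (vadd _ x (bopp X y)).

Definition l2sum (A B : VNS) : VNS := {|
  vcar := (vcar A * vcar B)%type;
  vadd := fun p q => (vadd _ (fst p) (fst q), vadd _ (snd p) (snd q));
  vscal := fun c p => (vscal _ c (fst p), vscal _ c (snd p));
  vnorm := fun p => sqrt (vnorm _ (fst p) ^ 2 + vnorm _ (snd p) ^ 2) |}.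

Definition bounded_linear {A B : VNS} (f : A -> B) : Prop :=
  (forall x y : A, f (vadd _ x y) = vadd _ (f x) (f y)) /\
  (forall (c : C) (x : A), f (vscal _ c x) = vscal _ c (f x)) /\
  exists M : R, forall x : A, vnorm _ (f x) <= M * vnorm _ x.

Definition invertible {A B : VNS} (f : A -> B) : Prop :=
  bounded_linear f /\
  exists g : B -> A, bounded_linear g /\
    (forall x : A, g (f x) = x) /\ (forall y : B, f (g y) = y).

(* Compact: the image of the closed unit ball is relatively compact,
   expressed sequentially (metric space). *)
Definition compact_op {X Y : Banach} (T : X -> Y) : Prop :=
  forall u : nat -> X, (forall n, vnorm _ (u n) <= 1) ->
    exists (phi : nat -> nat) (l : Y),
      (forall n, (phi n < phi (S n))%nat) /\
      (forall eps, eps > 0 -> exists N, forall n, (n >= N)%nat ->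
          dist (T (u (phi n))) l < eps).

Fixpoint lincomb (X : Banach) (cs : list C) (vs : list (vcar X)) : vcar X :=
  match cs, vs with
  | c :: cs', v :: vs' => vadd _ (vscal _ c v) (lincomb X cs' vs')
  | _, _ => bzero X
  end.

Definition finite_rank {X Y : Banach} (R0 : X -> Y) : Prop :=
  exists vs : list (vcar Y), forall x : X,
    exists cs : list C, R0 x = lincomb Y cs vs.

(* Equivalence after extension:
   [T 0; 0 id_X'] = E [S 0; 0 id_Y'] F. *)
Definition EAE {X Y : Banach} (T : X -> X) (S : Y -> Y) : Prop :=
  exists (X' Y' : Banach)
         (E : l2sum Y Y' -> l2sum X X') (F : l2sum X X' -> l2sum Y Y'),
    invertible E /\ invertible F /\
    forall (x : X) (x' : X'),
      ((T x, x') : l2sum X X') =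
      E ((S (fst (F (x, x'))), snd (F (x, x'))) : l2sum Y Y').

(* From [T (+) id = E (S (+) id) F] one reads off bounded operators [G], [H], [M] with
   [T = G S H + K T], where [K = T M] is compact.  By Riesz-Schauder theory [I - K] is
   invertible modulo finite rank on the left, [B (I - K) = I - Phi]; applying [B] to
   [(I - K) T = G S H] gives [T = (B G) S H + Phi T].  The Riesz-Schauder step avoids
   Hahn-Banach: the kernels and ranges of the powers [(I - K)^k] stabilise at some [p],
   [X] splits as [ker (I - K)^p (+) ran (I - K)^p], the kernel is finite-dimensional
   and [I - K] is a bounded bijection of the range. *)

From Pilot Require Import Defs.
From Stdlib Require Import Reals List Lra Lia Classical ClassicalEpsilon FunctionalExtensionality.
Open Scope R_scope.

(** * Normed-space preliminaries *)

Notation "x +v y" := (vadd _ x y) (at level 50, left associativity).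
Notation "-v x" := (bopp _ x) (at level 35, right associativity).
Notation "x -v y" := (vadd _ x (bopp _ y)) (at level 50, left associativity).
Notation nrm := (vnorm _).

Definition rscal {X : Banach} (r : R) (x : X) : X := vscal _ (r, 0) x.

Section VectorAlgebra.
Context {X : Banach}.
Implicit Types x y z : X.

Lemma vadd_assoc x y z : x +v (y +v z) = x +v y +v z.
Proof. apply b_add_assoc. Qed.
Lemma vadd_comm x y : x +v y = y +v x.
Proof. apply b_add_comm. Qed.
Lemma vadd_0_r x : x +v bzero X = x.
Proof. apply b_add_zero. Qed.
Lemma vadd_0_l x : bzero X +v x = x.
Proof. rewrite vadd_comm; apply vadd_0_r. Qed.
Lemma vadd_opp_r x : x -v x = bzero X.
Proof. apply b_add_opp. Qed.
Lemma vadd_opp_l x : -v x +v x = bzero X.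
Proof. rewrite vadd_comm; apply vadd_opp_r. Qed.
Lemma vopp_add_cancel_l x y : -v x +v (x +v y) = y.
Proof. rewrite vadd_assoc, vadd_opp_l, vadd_0_l; reflexivity. Qed.
Lemma vadd_permute x y z : x +v (y +v z) = y +v (x +v z).
Proof. rewrite !vadd_assoc, (vadd_comm x); reflexivity. Qed.
Lemma vadd_reg_l x y z : x +v y = x +v z -> y = z.
Proof. intro H. rewrite <- (vopp_add_cancel_l x y), H, vopp_add_cancel_l; reflexivity. Qed.
Lemma vopp_unique x y : x +v y = bzero X -> y = -v x.
Proof. intro H. apply (vadd_reg_l x). rewrite H, vadd_opp_r; reflexivity. Qed.
Lemma vopp_involutive x : -v (-v x) = x.
Proof. symmetry. apply vopp_unique, vadd_opp_l. Qed.
Lemma vopp_0 : -v (bzero X) = bzero X.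
Proof. symmetry; apply vopp_unique, vadd_0_r. Qed.
Lemma vopp_add x y : -v (x +v y) = -v x +v -v y.
Proof.
  symmetry; apply vopp_unique.
  rewrite (vadd_comm (-v x)), vadd_assoc, <- (vadd_assoc x), vadd_opp_r, vadd_0_r, vadd_opp_r.
  reflexivity.
Qed.
Lemma vopp_sub x y : -v (x -v y) = y -v x.
Proof. rewrite vopp_add, vopp_involutive, vadd_comm; reflexivity. Qed.
Lemma vsub_0_r x : x -v bzero X = x.
Proof. rewrite vopp_0; apply vadd_0_r. Qed.
Lemma vsub_eq_0 x y : x -v y = bzero X -> x = y.
Proof. intro H. apply vopp_unique in H. rewrite <- (vopp_involutive x), <- H, vopp_involutive; reflexivity. Qed.
Lemma vsub_sub_r x y : x -v (x -v y) = y.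
Proof. rewrite vopp_sub, vadd_permute, vadd_opp_r, vadd_0_r; reflexivity. Qed.
Lemma vsub_add_r x y : x -v y +v y = x.
Proof. rewrite <- vadd_assoc, vadd_opp_l, vadd_0_r; reflexivity. Qed.
Lemma vadd_sub_add x y z w : x +v y -v (z +v w) = (x -v z) +v (y -v w).
Proof. rewrite vopp_add, <- !vadd_assoc. f_equal. apply vadd_permute. Qed.
Lemma vsub_sub_l x y z : x -v z -v (x -v y) = y -v z.
Proof. rewrite vopp_sub, vadd_comm, <- vadd_assoc, vopp_add_cancel_l; reflexivity. Qed.

Lemma vscal_0_l x : vscal _ (0, 0) x = bzero X.
Proof.
  apply (vadd_reg_l (vscal _ (0, 0) x)).
  rewrite vadd_0_r, <- b_scal_distr_r. unfold Cplus; simpl. rewrite Rplus_0_l; reflexivity.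
Qed.
Lemma vscal_0_r c : vscal _ c (bzero X) = bzero X.
Proof.
  apply (vadd_reg_l (vscal _ c (bzero X))).
  rewrite vadd_0_r, <- b_scal_distr_l, vadd_0_r; reflexivity.
Qed.
Lemma vscal_m1 x : vscal _ (-1, 0) x = -v x.
Proof.
  apply vopp_unique. rewrite <- (b_scal_one _ x) at 1. unfold C1.
  rewrite <- b_scal_distr_r. unfold Cplus; simpl.
  replace (1 + -1) with 0 by ring. rewrite Rplus_0_l. apply vscal_0_l.
Qed.
Lemma vscal_comm (a b : Defs.C) x : vscal _ a (vscal _ b x) = vscal _ b (vscal _ a x).
Proof. rewrite !b_scal_assoc. f_equal. unfold Cmult. f_equal; ring. Qed.
Lemma vscal_opp c x : vscal _ c (-v x) = -v vscal _ c x.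
Proof. rewrite <- !vscal_m1, vscal_comm; reflexivity. Qed.
Lemma vscal_sub c x y : vscal _ c (x -v y) = vscal _ c x -v vscal _ c y.
Proof. rewrite b_scal_distr_l, vscal_opp; reflexivity. Qed.

Lemma Cmod_real r : Cmod (r, 0) = Rabs r.
Proof.
  unfold Cmod; simpl fst; simpl snd.
  replace (r ^ 2 + 0 ^ 2) with (Rsqr r) by (unfold Rsqr; ring). apply sqrt_Rsqr_abs.
Qed.

Lemma norm_0 : nrm (bzero X) = 0.
Proof. rewrite <- (vscal_0_l (bzero X)), b_norm_scal, Cmod_real, Rabs_R0; ring. Qed.
Lemma norm_opp x : nrm (-v x) = nrm x.
Proof.
  rewrite <- vscal_m1, b_norm_scal, Cmod_real.
  replace (-1) with (-(1)) by ring. rewrite Rabs_Ropp, Rabs_R1; ring.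
Qed.
Lemma norm_sub_comm x y : nrm (x -v y) = nrm (y -v x).
Proof. rewrite <- norm_opp, vopp_sub; reflexivity. Qed.
Lemma norm_sub_triang x y z : nrm (x -v z) <= nrm (x -v y) + nrm (y -v z).
Proof.
  replace (x -v z) with ((x -v y) +v (y -v z)) by (rewrite <- vadd_assoc, vopp_add_cancel_l; reflexivity).
  apply b_norm_triangle.
Qed.
Lemma norm_triang_rev x y : nrm x - nrm y <= nrm (x -v y).
Proof. pose proof (b_norm_triangle _ (x -v y) y). rewrite vsub_add_r in H. lra. Qed.
Lemma norm_pos x : x <> bzero X -> 0 < nrm x.
Proof.
  intro Hx. destruct (Rle_lt_or_eq_dec _ _ (b_norm_nonneg _ x)) as [|He]; auto.
  symmetry in He. apply b_norm_sep in He. contradiction.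
Qed.

Lemma rscal_1 x : rscal 1 x = x.
Proof. apply b_scal_one. Qed.
Lemma rscal_rscal r s x : rscal r (rscal s x) = rscal (r * s) x.
Proof. unfold rscal. rewrite b_scal_assoc. f_equal. unfold Cmult; simpl. f_equal; ring. Qed.
Lemma rscal_sub r x y : rscal r (x -v y) = rscal r x -v rscal r y.
Proof. apply vscal_sub. Qed.
Lemma norm_rscal r x : nrm (rscal r x) = Rabs r * nrm x.
Proof. unfold rscal; rewrite b_norm_scal, Cmod_real; reflexivity. Qed.

Lemma norm_normalize x : x <> bzero X -> nrm (rscal (/ nrm x) x) = 1.
Proof.
  intro Hx. pose proof (norm_pos x Hx).
  rewrite norm_rscal, Rabs_pos_eq by (left; apply Rinv_0_lt_compat; lra). apply Rinv_l; lra.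
Qed.
End VectorAlgebra.

Definition converges {X : Banach} (u : nat -> X) (l : X) : Prop :=
  forall eps, eps > 0 -> exists N, forall n, (n >= N)%nat -> nrm (u n -v l) < eps.
Definition strict_incr (phi : nat -> nat) : Prop := forall n, (phi n < phi (S n))%nat.

Lemma strict_incr_ge phi : strict_incr phi -> forall n, (n <= phi n)%nat.
Proof. intros H n; induction n; [lia|]. specialize (H n); lia. Qed.
Lemma strict_incr_mono phi : strict_incr phi -> forall m n, (m <= n)%nat -> (phi m <= phi n)%nat.
Proof. intros H m n Hmn; induction Hmn; [lia|]. specialize (H m0); lia. Qed.
Lemma strict_incr_comp phi psi :
  strict_incr phi -> strict_incr psi -> strict_incr (fun n => phi (psi n)).
Proof.
  intros H1 H2 n. specialize (H2 n).
  assert (phi (S (psi n)) <= phi (psi (S n)))%nat by (apply strict_incr_mono; auto; lia).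
  specialize (H1 (psi n)); lia.
Qed.

Lemma inv_INR_small eps : eps > 0 -> exists N, forall n, (n >= N)%nat -> / (INR n + 1) < eps.
Proof.
  intro He. destruct (INR_archimed eps 1 He) as [N HN]. exists N. intros n Hn.
  apply le_INR in Hn. pose proof (pos_INR N).
  apply Rmult_lt_reg_l with (INR n + 1). lra. rewrite Rinv_r by lra. nra.
Qed.

Section Convergence.
Context {X : Banach}.
Implicit Types u v : nat -> X.

Lemma converges_ext u v l : (forall n, u n = v n) -> converges u l -> converges v l.
Proof. intros He Hu eps Hep. destruct (Hu eps Hep) as [N HN]. exists N. intros. rewrite <- He; auto. Qed.

Lemma converges_subseq u l phi : strict_incr phi -> converges u l -> converges (fun n => u (phi n)) l.
Proof.
  intros Hp Hu eps He. destruct (Hu eps He) as [N HN]. exists N. intros n Hn.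
  apply HN. pose proof (strict_incr_ge _ Hp n); lia.
Qed.

Lemma converges_unique u l1 l2 : converges u l1 -> converges u l2 -> l1 = l2.
Proof.
  intros H1 H2. apply vsub_eq_0, b_norm_sep.
  destruct (Rle_lt_or_eq_dec 0 (nrm (l1 -v l2)) (b_norm_nonneg _ _)) as [Hlt|]; [|auto].
  exfalso. set (e := nrm (l1 -v l2)) in *.
  destruct (H1 (e / 2)) as [N1 HN1]; [lra|]. destruct (H2 (e / 2)) as [N2 HN2]; [lra|].
  specialize (HN1 (N1 + N2)%nat (Nat.le_add_r N1 N2)). specialize (HN2 (N1 + N2)%nat (Nat.le_add_l N2 N1)).
  pose proof (norm_sub_triang l1 (u (N1 + N2)%nat) l2).
  rewrite (norm_sub_comm l1 (u _)) in H. fold e in H. lra.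
Qed.

Lemma converges_const (a : X) : converges (fun _ => a) a.
Proof. intros eps He. exists 0%nat. intros. rewrite vadd_opp_r, norm_0. auto. Qed.

Lemma converges_add u v a b :
  converges u a -> converges v b -> converges (fun n => u n +v v n) (a +v b).
Proof.
  intros Hu Hv eps He.
  destruct (Hu (eps / 2)) as [N1 H1]; [lra|]. destruct (Hv (eps / 2)) as [N2 H2]; [lra|].
  exists (N1 + N2)%nat. intros n Hn. rewrite vadd_sub_add.
  pose proof (b_norm_triangle _ (u n -v a) (v n -v b)).
  assert (n >= N1)%nat by lia. assert (n >= N2)%nat by lia.
  specialize (H1 n ltac:(assumption)). specialize (H2 n ltac:(assumption)). lra.
Qed.

Lemma converges_opp u (a : X) : converges u a -> converges (fun n => -v u n) (-v a).
Proof.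
  intros Hu eps He. destruct (Hu eps He) as [N HN]. exists N. intros n Hn.
  rewrite <- vopp_add, norm_opp. auto.
Qed.

Lemma converges_rscal u (a : X) r : converges u a -> converges (fun n => rscal r (u n)) (rscal r a).
Proof.
  intros Hu eps He. destruct (Hu (eps / (Rabs r + 1))) as [N HN].
  { apply Rdiv_lt_0_compat; [lra | pose proof (Rabs_pos r); lra]. }
  exists N. intros n Hn. rewrite <- rscal_sub, norm_rscal.
  specialize (HN n Hn). pose proof (Rabs_pos r). pose proof (b_norm_nonneg _ (u n -v a)).
  apply Rle_lt_trans with ((Rabs r + 1) * nrm (u n -v a)); [nra|].
  apply Rmult_lt_reg_l with (/ (Rabs r + 1)). apply Rinv_0_lt_compat; lra.
  rewrite <- Rmult_assoc, Rinv_l by lra. lra.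
Qed.

Lemma converges_bounded u (a : X) : converges u a -> exists B, forall n, nrm (u n) <= B.
Proof.
  intro Hu. destruct (Hu 1) as [N HN]; [lra|].
  assert (exists B, forall n, (n < N)%nat -> nrm (u n) <= B) as [B HB].
  { clear HN. induction N. { exists 0. intros; lia. }
    destruct IHN as [B HB]. exists (Rmax B (nrm (u N))). intros n Hn.
    destruct (Nat.eq_dec n N) as [->|]; [apply Rmax_r|].
    eapply Rle_trans; [apply HB; lia | apply Rmax_l]. }
  exists (Rmax B (nrm a + 1)). intros n. destruct (Nat.lt_ge_cases n N).
  - eapply Rle_trans; [apply HB; lia | apply Rmax_l].
  - eapply Rle_trans; [|apply Rmax_r]. specialize (HN n H).
    pose proof (norm_triang_rev (u n) a). lra.
Qed.

Lemma converges_0_harmonic u (B : R) :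
  (forall n, nrm (u n) <= B * / (INR n + 1)) -> converges u (bzero X).
Proof.
  intros Hu eps He. destruct (inv_INR_small (eps / (Rabs B + 1))) as [N HN].
  { apply Rdiv_lt_0_compat; [lra | pose proof (Rabs_pos B); lra]. }
  exists N. intros n Hn. rewrite vsub_0_r. specialize (HN n Hn). specialize (Hu n).
  pose proof (pos_INR n). pose proof (Rle_abs B). pose proof (Rabs_pos B).
  assert (0 < / (INR n + 1)) by (apply Rinv_0_lt_compat; lra).
  assert ((Rabs B + 1) * / (INR n + 1) < eps).
  { apply Rmult_lt_reg_l with (/ (Rabs B + 1)). apply Rinv_0_lt_compat; lra.
    rewrite <- Rmult_assoc, Rinv_l, Rmult_1_l by lra. unfold Rdiv in HN. lra. }
  nra.
Qed.
Lemma unbounded_seq_large (z : nat -> X) :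
  ~ (exists M, forall n, nrm (z n) <= M) -> exists psi, forall k, nrm (z (psi k)) > INR k + 1.
Proof.
  intro Hunb. apply (choice (fun k n => nrm (z n) > INR k + 1)). intro k. apply NNPP. intro Hk. apply Hunb.
  exists (INR k + 1). intro n. apply Rnot_lt_le. intro. apply Hk. eauto.
Qed.

End Convergence.

Section BoundedLinear.
Context {X Y : Banach}.
Implicit Types f g : X -> Y.

Lemma linear_add f x y : bounded_linear f -> f (x +v y) = f x +v f y.
Proof. intros [H _]; apply H. Qed.
Lemma linear_scal f c x : bounded_linear f -> f (vscal _ c x) = vscal _ c (f x).
Proof. intros [_ [H _]]; apply H. Qed.
Lemma linear_rscal f r x : bounded_linear f -> f (rscal r x) = rscal r (f x).
Proof. apply linear_scal. Qed.
Lemma linear_0 f : bounded_linear f -> f (bzero X) = bzero Y.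
Proof. intro H. rewrite <- (vscal_0_l (bzero X)), linear_scal, vscal_0_l; auto. Qed.
Lemma linear_opp f x : bounded_linear f -> f (-v x) = -v f x.
Proof. intro H. rewrite <- !vscal_m1, linear_scal; auto. Qed.
Lemma linear_sub f x y : bounded_linear f -> f (x -v y) = f x -v f y.
Proof. intro H. rewrite linear_add, linear_opp; auto. Qed.

Lemma linear_bound f : bounded_linear f -> exists M, M > 0 /\ forall x, nrm (f x) <= M * nrm x.
Proof.
  intros [_ [_ [M HM]]]. exists (Rmax M 1). split; [pose proof (Rmax_r M 1); lra|].
  intro x. eapply Rle_trans; [apply HM|].
  apply Rmult_le_compat_r; [apply b_norm_nonneg | apply Rmax_l].
Qed.

Lemma linear_converges f u a : bounded_linear f -> converges u a -> converges (fun n => f (u n)) (f a).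
Proof.
  intros Hf Hu. destruct (linear_bound f Hf) as [M [HM0 HM]]. intros eps He.
  destruct (Hu (eps / M)) as [N HN]; [apply Rdiv_lt_0_compat; lra|].
  exists N. intros n Hn. rewrite <- linear_sub by auto. eapply Rle_lt_trans; [apply HM|].
  specialize (HN n Hn). replace eps with (M * (eps / M)) by (field; lra).
  apply Rmult_lt_compat_l; auto.
Qed.

Lemma bounded_linear_add f g :
  bounded_linear f -> bounded_linear g -> bounded_linear (fun x => f x +v g x).
Proof.
  intros Hf Hg. split; [|split].
  - intros. rewrite !linear_add by auto. rewrite <- !vadd_assoc. f_equal. apply vadd_permute.
  - intros. rewrite !linear_scal by auto. symmetry; apply b_scal_distr_l.
  - destruct (linear_bound f Hf) as [M1 [_ H1]]. destruct (linear_bound g Hg) as [M2 [_ H2]].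
    exists (M1 + M2). intro x. eapply Rle_trans; [apply b_norm_triangle|].
    specialize (H1 x); specialize (H2 x). lra.
Qed.

Lemma bounded_linear_opp f : bounded_linear f -> bounded_linear (fun x => -v f x).
Proof.
  intros Hf. split; [|split].
  - intros. rewrite linear_add, vopp_add by auto. reflexivity.
  - intros. rewrite linear_scal, vscal_opp by auto. reflexivity.
  - destruct (linear_bound f Hf) as [M [_ HM]]. exists M. intro x. rewrite norm_opp. auto.
Qed.

Lemma bounded_linear_sub f g :
  bounded_linear f -> bounded_linear g -> bounded_linear (fun x => f x -v g x).
Proof. intros Hf Hg. apply bounded_linear_add; auto. apply bounded_linear_opp; auto. Qed.
End BoundedLinear.

Lemma bounded_linear_id {A : VNS} : bounded_linear (fun x : A => x).
Proof. split; [|split]; auto. exists 1; intros; lra. Qed.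

(* The middle space of a composition must have a nonnegative norm: [VNS] does not demand it. *)
Lemma bounded_linear_comp {A B D : VNS} (f : B -> D) (g : A -> B) :
  (forall y : B, 0 <= vnorm B y) ->
  bounded_linear f -> bounded_linear g -> bounded_linear (fun x => f (g x)).
Proof.
  intros HB [f1 [f2 [M1 HM1]]] [g1 [g2 [M2 HM2]]]. split; [|split].
  - intros; rewrite g1, f1; auto.
  - intros; rewrite g2, f2; auto.
  - exists (Rmax M1 0 * M2). intro x. eapply Rle_trans; [apply HM1|].
    apply Rle_trans with (Rmax M1 0 * vnorm _ (g x)).
    + apply Rmult_le_compat_r; [apply HB | apply Rmax_l].
    + rewrite Rmult_assoc. apply Rmult_le_compat_l; [apply Rmax_r | apply HM2].
Qed.

Section Compact.
Context {X Y : Banach}.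

Lemma compact_bounded_seq (K : X -> Y) (u : nat -> X) (M : R) :
  bounded_linear K -> compact_op K -> (forall n, nrm (u n) <= M) ->
  exists phi l, strict_incr phi /\ converges (fun n => K (u (phi n))) l.
Proof.
  intros HK HC HM. set (c := Rmax M 1).
  assert (Hc : c > 0) by (pose proof (Rmax_r M 1); unfold c; lra).
  destruct (HC (fun n => rscal (/ c) (u n))) as [phi [l [Hp Hl]]].
  { intro n. rewrite norm_rscal, Rabs_pos_eq by (left; apply Rinv_0_lt_compat; lra).
    apply Rmult_le_reg_l with c; auto.
    rewrite <- Rmult_assoc, Rinv_r, Rmult_1_l, Rmult_1_r by lra.
    eapply Rle_trans; [apply HM | apply Rmax_l]. }
  exists phi, (rscal c l). split; auto.
  apply converges_ext with (fun n => rscal c (K (rscal (/ c) (u (phi n))))).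
  - intro n. rewrite linear_rscal, rscal_rscal, Rinv_r, rscal_1 by (auto; lra). reflexivity.
  - apply converges_rscal. exact Hl.
Qed.

Lemma compact_add (K1 K2 : X -> Y) :
  compact_op K1 -> compact_op K2 -> compact_op (fun x => K1 x +v K2 x).
Proof.
  intros C1 C2 u Hu.
  destruct (C1 u Hu) as [phi [l1 [Hp H1]]].
  destruct (C2 (fun n => u (phi n)) (fun n => Hu _)) as [psi [l2 [Hq H2]]].
  exists (fun n => phi (psi n)), (l1 +v l2). split; [apply strict_incr_comp; auto|].
  apply (converges_add (fun n => K1 (u (phi (psi n)))) (fun n => K2 (u (phi (psi n))))); auto.
  apply (converges_subseq (fun n => K1 (u (phi n)))); auto.
Qed.

Lemma compact_0 : compact_op (fun _ : X => bzero Y).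
Proof. intros u _. exists (fun n => n), (bzero Y). split; [intro; lia | apply converges_const]. Qed.
End Compact.

Lemma compact_comp_bounded {X Y Z : Banach} (K : Y -> Z) (M : X -> Y) :
  bounded_linear K -> bounded_linear M -> compact_op K -> compact_op (fun x => K (M x)).
Proof.
  intros HK HM CK u Hu. destruct (linear_bound M HM) as [B [HB0 HB]].
  destruct (compact_bounded_seq K (fun n => M (u n)) B HK CK) as [phi [l [Hp Hl]]].
  { intro n. eapply Rle_trans; [apply HB|]. specialize (Hu n). nra. }
  exists phi, l. auto.
Qed.

(** * Closed subspaces and the Riesz lemma *)

Definition subspace {X : Banach} (V : X -> Prop) : Prop :=
  V (bzero X) /\ (forall x y, V x -> V y -> V (x +v y)) /\ (forall c x, V x -> V (vscal _ c x)).
Definition seq_closed {X : Banach} (V : X -> Prop) : Prop :=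
  forall u l, (forall n, V (u n)) -> converges u l -> V l.

Section Subspace.
Context {X : Banach} (V : X -> Prop) (HV : subspace V).
Lemma subspace_0 : V (bzero X). Proof. apply HV. Qed.
Lemma subspace_add x y : V x -> V y -> V (x +v y). Proof. apply HV. Qed.
Lemma subspace_scal c x : V x -> V (vscal _ c x). Proof. apply HV. Qed.
Lemma subspace_rscal r x : V x -> V (rscal r x). Proof. apply subspace_scal. Qed.
Lemma subspace_opp x : V x -> V (-v x).
Proof. intro. rewrite <- vscal_m1. apply subspace_scal; auto. Qed.
Lemma subspace_sub x y : V x -> V y -> V (x -v y).
Proof. intros. apply subspace_add; auto. apply subspace_opp; auto. Qed.
End Subspace.

Section KernelRange.
Context {X Y : Banach} (f : X -> Y) (Hf : bounded_linear f).

Lemma kernel_subspace : subspace (fun x => f x = bzero Y).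
Proof.
  split; [|split].
  - apply linear_0; auto.
  - intros x y Hx Hy. rewrite linear_add, Hx, Hy, vadd_0_r; auto.
  - intros c x Hx. rewrite linear_scal, Hx, vscal_0_r; auto.
Qed.

Lemma kernel_closed : seq_closed (fun x => f x = bzero Y).
Proof.
  intros u l Hu Hc. apply (converges_unique (fun n => f (u n))).
  - apply linear_converges; auto.
  - apply converges_ext with (fun _ => bzero Y); [intro; symmetry; auto | apply converges_const].
Qed.

Lemma range_subspace : subspace (fun y => exists x, y = f x).
Proof.
  split; [|split].
  - exists (bzero X). symmetry; apply linear_0; auto.
  - intros x y [a ->] [b ->]. exists (a +v b). rewrite linear_add; auto.
  - intros c x [a ->]. exists (vscal _ c a). rewrite linear_scal; auto.
Qed.
End KernelRange.

Section Riesz.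
Context {X : Banach} (V : X -> Prop) (HV : subspace V) (CV : seq_closed V).

Lemma distance_inf x : exists m, (forall v, V v -> m <= nrm (x -v v)) /\
  forall e, e > 0 -> exists v, V v /\ nrm (x -v v) < m + e.
Proof.
  set (E := fun r => exists v, V v /\ r = - nrm (x -v v)).
  assert (HB : bound E).
  { exists 0. intros r [v [_ ->]]. pose proof (b_norm_nonneg _ (x -v v)). lra. }
  assert (HE : exists r, E r) by (exists (- nrm (x -v bzero X)), (bzero X); split; auto; apply HV).
  destruct (completeness E HB HE) as [s [Hub Hlub]]. exists (- s). split.
  - intros v Hv. assert (- nrm (x -v v) <= s) by (apply Hub; exists v; auto). lra.
  - intros e He. apply NNPP. intro Hn.
    assert (s <= s - e); [|lra].
    apply Hlub. intros r [v [Hv ->]]. apply Rnot_lt_le. intro. apply Hn. exists v. split; auto. lra.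
Qed.

Lemma distance_pos x : ~ V x -> exists m, m > 0 /\ forall v, V v -> m <= nrm (x -v v).
Proof.
  intro Hx. destruct (distance_inf x) as [m [Hm Happ]]. exists m. split; auto.
  destruct (Rlt_or_le 0 m) as [|Hm0]; auto. exfalso. apply Hx.
  assert (Hs : forall n : nat, exists v, V v /\ nrm (x -v v) < / (INR n + 1)).
  { intro n. destruct (Happ (/ (INR n + 1))) as [v [Hv Hlt]].
    - apply Rinv_0_lt_compat. pose proof (pos_INR n). lra.
    - exists v. split; auto. lra. }
  apply choice in Hs. destruct Hs as [w Hw].
  apply (CV w x); [intro n; apply Hw|].
  intros eps He. destruct (inv_INR_small eps He) as [N HN]. exists N. intros n Hn.
  rewrite norm_sub_comm. specialize (Hw n). specialize (HN n Hn). lra.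
Qed.

Lemma riesz_residual x : exists z, V (x -v z) /\ forall v, V v -> nrm z <= 2 * nrm (z -v v).
Proof.
  destruct (classic (V x)) as [Hx|Hx].
  { exists (bzero X). rewrite vsub_0_r. split; auto. intros v _.
    rewrite norm_0. pose proof (b_norm_nonneg _ (bzero X -v v)). lra. }
  destruct (distance_inf x) as [m [Hm Happ]]. destruct (distance_pos x Hx) as [m' [Hm' Hlow]].
  assert (Hmpos : m > 0).
  { destruct (Happ m') as [v [Hv Hlt]]; auto. specialize (Hlow v Hv). lra. }
  destruct (Happ m Hmpos) as [v0 [Hv0 Hlt]]. exists (x -v v0). rewrite vsub_sub_r. split; auto.
  intros v Hv. replace (x -v v0 -v v) with (x -v (v0 +v v))
    by (rewrite vopp_add, vadd_assoc; reflexivity).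
  specialize (Hm (v0 +v v) (subspace_add V HV _ _ Hv0 Hv)). lra.
Qed.

Lemma normalized_residual_far z : z <> bzero X ->
  (forall v, V v -> nrm z <= 2 * nrm (z -v v)) ->
  forall v, V v -> 1 / 2 <= nrm (rscal (/ nrm z) z -v v).
Proof.
  intros Hz0 Hz v Hv. pose proof (norm_pos z Hz0).
  specialize (Hz (rscal (nrm z) v) (subspace_rscal V HV _ _ Hv)).
  replace (rscal (/ nrm z) z -v v) with (rscal (/ nrm z) (z -v rscal (nrm z) v))
    by (rewrite rscal_sub, rscal_rscal, Rinv_l, rscal_1 by lra; reflexivity).
  rewrite norm_rscal, Rabs_pos_eq by (left; apply Rinv_0_lt_compat; lra).
  apply Rmult_le_reg_l with (nrm z); auto. rewrite <- Rmult_assoc, Rinv_r by lra. lra.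
Qed.

Lemma riesz_lemma (W : X -> Prop) y : subspace W -> (forall x, V x -> W x) -> W y -> ~ V y ->
  exists x, W x /\ nrm x <= 1 /\ forall v, V v -> 1 / 2 <= nrm (x -v v).
Proof.
  intros HW HVW Hy Hny. destruct (riesz_residual y) as [z [Hz Hzm]].
  assert (Hz0 : z <> bzero X) by (intros ->; rewrite vsub_0_r in Hz; auto).
  exists (rscal (/ nrm z) z). split; [|split].
  - apply subspace_rscal; auto. rewrite <- (vsub_sub_r y z). apply subspace_sub; auto.
  - rewrite norm_normalize; auto; lra.
  - apply normalized_residual_far; auto.
Qed.
End Riesz.

(** * Operators [I - K] with [K] compact *)

Definition I_minus {X : Banach} (K : X -> X) (x : X) : X := x -v K x.

Section IdMinusCompact.
Context {X : Banach} (K : X -> X) (LK : bounded_linear K) (CK : compact_op K).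
Local Notation A := (I_minus K).

Lemma I_minus_linear : bounded_linear A.
Proof. apply bounded_linear_sub; [apply bounded_linear_id | exact LK]. Qed.

Lemma compact_no_separated_images (u : nat -> X) : (forall n, nrm (u n) <= 1) ->
  ~ (forall j k, (j < k)%nat -> 1 / 2 <= nrm (K (u k) -v K (u j))).
Proof.
  intros Hu Hs. destruct (CK u Hu) as [phi [l [Hp Hl]]].
  destruct (Hl (1 / 4)) as [N HN]; [lra|]. unfold Defs.dist in HN.
  pose proof (HN N (le_n _)). pose proof (HN (S N) (Nat.le_succ_diag_r N)).
  specialize (Hs (phi N) (phi (S N)) (Hp N)).
  pose proof (norm_sub_triang (K (u (phi (S N)))) l (K (u (phi N)))).
  rewrite (norm_sub_comm l) in H1. lra.
Qed.

Lemma I_minus_null_subseq (u : nat -> X) : (forall n, nrm (u n) <= 1) ->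
  converges (fun n => A (u n)) (bzero X) ->
  exists phi l, strict_incr phi /\ converges (fun n => u (phi n)) l /\ A l = bzero X.
Proof.
  intros Hu HA. destruct (compact_bounded_seq K u 1 LK CK Hu) as [phi [l [Hp Hl]]].
  assert (Hc : converges (fun n => u (phi n)) l).
  { apply converges_ext with (fun n => A (u (phi n)) +v K (u (phi n))).
    - intro n. apply vsub_add_r.
    - rewrite <- (vadd_0_l l). apply converges_add; auto.
      apply (converges_subseq (fun n => A (u n))); auto. }
  exists phi, l. split; [|split]; auto.
  apply (converges_unique (fun n => A (u (phi n)))).
  - apply linear_converges; auto. apply I_minus_linear.
  - apply (converges_subseq (fun n => A (u n))); auto.
Qed.

(* If not, the normalised residuals have images tending to 0, so by compactness a
   subsequence converges into the kernel, against their Riesz separation from it. *)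
Lemma I_minus_residuals_bounded (z : nat -> X) (B : R) :
  (forall n v, A v = bzero X -> nrm (z n) <= 2 * nrm (z n -v v)) ->
  (forall n, nrm (A (z n)) <= B) -> exists M, forall n, nrm (z n) <= M.
Proof.
  intros Hz HB. apply NNPP. intro Hunb. destruct (unbounded_seq_large z Hunb) as [psi Hpsi].
  assert (Hz0 : forall k, z (psi k) <> bzero X).
  { intros k Hk. specialize (Hpsi k). rewrite Hk, norm_0 in Hpsi. pose proof (pos_INR k). lra. }
  set (w := fun k => rscal (/ nrm (z (psi k))) (z (psi k))).
  assert (Hw1 : forall k, nrm (w k) <= 1) by (intro k; unfold w; rewrite norm_normalize; auto; lra).
  assert (HAw : converges (fun k => A (w k)) (bzero X)).
  { apply converges_0_harmonic with B. intro k. unfold w.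
    rewrite linear_rscal, norm_rscal by apply I_minus_linear.
    pose proof (norm_pos _ (Hz0 k)). specialize (Hpsi k). pose proof (pos_INR k).
    rewrite Rabs_pos_eq by (left; apply Rinv_0_lt_compat; lra).
    assert (/ nrm (z (psi k)) < / (INR k + 1)) by (apply Rinv_lt_contravar; nra).
    assert (0 < / nrm (z (psi k))) by (apply Rinv_0_lt_compat; lra).
    pose proof (HB (psi k)). pose proof (b_norm_nonneg _ (A (z (psi k)))). nra. }
  destruct (I_minus_null_subseq w Hw1 HAw) as [phi [l [Hp [Hl HAl]]]].
  destruct (Hl (1 / 2)) as [M HM]; [lra|]. specialize (HM M (le_n _)).
  assert (1 / 2 <= nrm (w (phi M) -v l)); [|lra].
  apply (normalized_residual_far (fun x => A x = bzero X)); auto.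
  apply kernel_subspace, I_minus_linear.
Qed.

Lemma I_minus_range_closed : seq_closed (fun y => exists x, y = A x).
Proof.
  intros u y Hu Hc. apply choice in Hu. destruct Hu as [xs Hxs].
  set (N := fun x => A x = bzero X).
  assert (Hz : forall n, exists z, N (xs n -v z) /\ forall v, N v -> nrm z <= 2 * nrm (z -v v)).
  { intro n. apply riesz_residual; [apply kernel_subspace | apply kernel_closed]; apply I_minus_linear. }
  apply choice in Hz. destruct Hz as [z Hz].
  assert (HAz : forall n, A (z n) = u n).
  { intro n. destruct (Hz n) as [H _]. unfold N in H. rewrite linear_sub in H by apply I_minus_linear.
    apply vsub_eq_0 in H. rewrite Hxs, H. reflexivity. }
  destruct (converges_bounded u y Hc) as [B HB].
  destruct (I_minus_residuals_bounded z B) as [M HM].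
  { intro n. apply Hz. }
  { intro n. rewrite HAz. apply HB. }
  destruct (compact_bounded_seq K z M LK CK HM) as [phi [l [Hp Hl]]].
  assert (Hzc : converges (fun n => z (phi n)) (y +v l)).
  { apply converges_ext with (fun n => A (z (phi n)) +v K (z (phi n))).
    - intro n. apply vsub_add_r.
    - apply converges_add; auto. apply converges_ext with (fun n => u (phi n)).
      + intro n. symmetry; auto.
      + apply converges_subseq; auto. }
  exists (y +v l). apply (converges_unique (fun n => u (phi n))).
  - apply converges_subseq; auto.
  - apply converges_ext with (fun n => A (z (phi n))); [intro n; auto|].
    apply linear_converges; auto. apply I_minus_linear.
Qed.

Lemma I_minus_bounded_below (V : X -> Prop) : subspace V -> seq_closed V ->
  (forall l, V l -> A l = bzero X -> l = bzero X) ->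
  exists c, c > 0 /\ forall v, V v -> nrm v <= c * nrm (A v).
Proof.
  intros HV CV Hinj. apply NNPP. intro Hn.
  assert (Hs : forall n : nat, exists v, V v /\ nrm v > (INR n + 1) * nrm (A v)).
  { intro n. apply NNPP. intro Hk. apply Hn. exists (INR n + 1). split; [pose proof (pos_INR n); lra|].
    intros v Hv. apply Rnot_lt_le. intro. apply Hk. eauto. }
  apply choice in Hs. destruct Hs as [v Hv].
  assert (Hv0 : forall n, v n <> bzero X).
  { intros n Hz. destruct (Hv n) as [_ H]. rewrite Hz, norm_0 in H.
    pose proof (b_norm_nonneg _ (A (bzero X))). pose proof (pos_INR n). nra. }
  set (w := fun n => rscal (/ nrm (v n)) (v n)).
  assert (Hw1 : forall n, nrm (w n) = 1) by (intro n; apply norm_normalize; auto).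
  assert (HAw : converges (fun n => A (w n)) (bzero X)).
  { apply converges_0_harmonic with 1. intro n. unfold w.
    rewrite linear_rscal, norm_rscal by apply I_minus_linear.
    pose proof (norm_pos _ (Hv0 n)). destruct (Hv n) as [_ Hlt]. pose proof (pos_INR n).
    rewrite Rabs_pos_eq by (left; apply Rinv_0_lt_compat; lra).
    apply Rmult_le_reg_l with (nrm (v n) * (INR n + 1)); [nra|].
    replace (nrm (v n) * (INR n + 1) * (/ nrm (v n) * nrm (A (v n))))
      with ((INR n + 1) * nrm (A (v n))) by (field; lra).
    replace (nrm (v n) * (INR n + 1) * (1 * / (INR n + 1))) with (nrm (v n)) by (field; lra).
    lra. }
  destruct (I_minus_null_subseq w (fun n => Req_le _ _ (Hw1 n)) HAw) as [phi [l [Hp [Hl HAl]]]].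
  assert (l = bzero X) as ->.
  { apply Hinj; auto. apply (CV (fun n => w (phi n))); auto.
    intro n. apply subspace_rscal; auto. apply Hv. }
  destruct (Hl (1 / 2)) as [N HN]; [lra|]. specialize (HN N (le_n _)).
  rewrite vsub_0_r, Hw1 in HN. lra.
Qed.
End IdMinusCompact.

(** * Finite-dimensional subspaces *)

Definition Csub (a b : Defs.C) : Defs.C := (fst a - fst b, snd a - snd b).
Definition Cinv (a : Defs.C) : Defs.C :=
  (fst a / (fst a ^ 2 + snd a ^ 2), - snd a / (fst a ^ 2 + snd a ^ 2)).

Lemma Cinv_r a : a <> (0, 0) -> Cmult a (Cinv a) = Defs.C1.
Proof.
  intro H. destruct a as [x y]. unfold Cmult, Cinv, Defs.C1; simpl.
  assert (x * (x * 1) + y * (y * 1) <> 0).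
  { intro Hz. apply H. assert (x = 0) by nra. assert (y = 0) by nra. subst; auto. }
  f_equal; field; intro; apply H0; lra.
Qed.

Lemma Cmod_fst a : Rabs (fst a) <= Cmod a.
Proof.
  unfold Cmod. rewrite <- sqrt_Rsqr_abs. apply sqrt_le_1_alt.
  unfold Rsqr. pose proof (pow2_ge_0 (snd a)). simpl in *. nra.
Qed.
Lemma Cmod_snd a : Rabs (snd a) <= Cmod a.
Proof.
  unfold Cmod. rewrite <- sqrt_Rsqr_abs. apply sqrt_le_1_alt.
  unfold Rsqr. pose proof (pow2_ge_0 (fst a)). simpl in *. nra.
Qed.
Lemma Cmod_le_sum a : Cmod a <= Rabs (fst a) + Rabs (snd a).
Proof.
  unfold Cmod. pose proof (Rabs_pos (fst a)). pose proof (Rabs_pos (snd a)).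
  rewrite <- (sqrt_Rsqr (Rabs (fst a) + Rabs (snd a))) by lra. apply sqrt_le_1_alt.
  rewrite <- (pow2_abs (fst a)), <- (pow2_abs (snd a)). unfold Rsqr. nra.
Qed.

Lemma C_cauchy_converges (a : nat -> Defs.C) :
  (forall eps, eps > 0 -> exists N, forall n m, (n >= N)%nat -> (m >= N)%nat ->
     Cmod (Csub (a n) (a m)) < eps) ->
  exists b, forall eps, eps > 0 -> exists N, forall n, (n >= N)%nat -> Cmod (Csub (a n) b) < eps.
Proof.
  intro Hcau.
  destruct (R_complete (fun n => fst (a n))) as [b1 Hb1].
  { intros eps He. destruct (Hcau eps He) as [N HN]. exists N. intros n m Hn Hm.
    specialize (HN n m Hn Hm). pose proof (Cmod_fst (Csub (a n) (a m))). unfold R_dist. simpl in *. lra. }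
  destruct (R_complete (fun n => snd (a n))) as [b2 Hb2].
  { intros eps He. destruct (Hcau eps He) as [N HN]. exists N. intros n m Hn Hm.
    specialize (HN n m Hn Hm). pose proof (Cmod_snd (Csub (a n) (a m))). unfold R_dist. simpl in *. lra. }
  exists (b1, b2). intros eps He.
  destruct (Hb1 (eps / 2)) as [N1 HN1]; [lra|]. destruct (Hb2 (eps / 2)) as [N2 HN2]; [lra|].
  exists (N1 + N2)%nat. intros n Hn. assert (n >= N1)%nat by lia. assert (n >= N2)%nat by lia.
  specialize (HN1 n ltac:(assumption)). specialize (HN2 n ltac:(assumption)). unfold R_dist in *.
  pose proof (Cmod_le_sum (Csub (a n) (b1, b2))). simpl in *. lra.
Qed.

Section FiniteDim.
Context {X : Banach}.

Lemma vscal_Csub (a b : Defs.C) (v : X) : vscal _ (Csub a b) v = vscal _ a v -v vscal _ b v.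
Proof.
  replace (Csub a b) with (Cplus a (Cmult (-1, 0) b)) by (unfold Cplus, Cmult, Csub; simpl; f_equal; ring).
  rewrite b_scal_distr_r, <- b_scal_assoc, vscal_m1. reflexivity.
Qed.

Fixpoint span (vs : list X) (x : X) : Prop :=
  match vs with
  | nil => x = bzero X
  | v :: vs => exists a w, span vs w /\ x = vscal _ a v +v w
  end.

Lemma span_subspace vs : subspace (span vs).
Proof.
  induction vs as [|v vs IH]; split; [| split | | split]; simpl.
  - auto.
  - intros x y -> ->. apply vadd_0_r.
  - intros c x ->. apply vscal_0_r.
  - exists (0, 0), (bzero X). split; [apply IH|]. rewrite vscal_0_l, vadd_0_r; auto.
  - intros x y [a [w [Hw ->]]] [b [w' [Hw' ->]]]. exists (Cplus a b), (w +v w'). split.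
    + apply subspace_add; auto.
    + rewrite b_scal_distr_r, <- !vadd_assoc. f_equal. apply vadd_permute.
  - intros c x [a [w [Hw ->]]]. exists (Cmult c a), (vscal _ c w). split.
    + apply subspace_scal; auto.
    + rewrite b_scal_distr_l, b_scal_assoc. reflexivity.
Qed.

Lemma span_In vs v : In v vs -> span vs v.
Proof.
  induction vs as [|a vs IH]; simpl; [tauto|]. intros [->|Hin].
  - exists Defs.C1, (bzero X). split; [apply subspace_0, span_subspace|]. rewrite b_scal_one, vadd_0_r; auto.
  - exists (0, 0), v. split; auto. rewrite vscal_0_l, vadd_0_l; auto.
Qed.

Lemma span_incl (V : X -> Prop) vs : subspace V -> (forall v, In v vs -> V v) ->
  forall x, span vs x -> V x.
Proof.
  intro HV. induction vs as [|a vs IH]; simpl; intros Hall x Hx.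
  - subst. apply subspace_0; auto.
  - destruct Hx as [c [w [Hw ->]]]. apply subspace_add; auto. apply subspace_scal; auto.
Qed.

Lemma span_lincomb vs x : span vs x -> exists cs, x = lincomb X cs vs.
Proof.
  revert x. induction vs as [|v vs IH]; simpl; intros x Hx.
  - exists nil. auto.
  - destruct Hx as [a [w [Hw ->]]]. destruct (IH w Hw) as [cs ->]. exists (a :: cs). reflexivity.
Qed.

Lemma span_coeff_bound vs v (d : R) : (forall w, span vs w -> d <= nrm (v -v w)) ->
  forall a w, span vs w -> Cmod a * d <= nrm (vscal _ a v +v w).
Proof.
  intros Hd a w Hw. destruct (classic (a = (0, 0))) as [->|Ha].
  - unfold Cmod; simpl. replace (0 * (0 * 1) + 0 * (0 * 1)) with 0 by ring.
    rewrite sqrt_0, Rmult_0_l. apply b_norm_nonneg.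
  - replace (vscal _ a v +v w) with (vscal _ a (v -v (-v vscal _ (Cinv a) w)))
      by (rewrite vopp_involutive, b_scal_distr_l, b_scal_assoc, Cinv_r, b_scal_one; auto).
    rewrite b_norm_scal. apply Rmult_le_compat_l; [apply sqrt_pos|]. apply Hd.
    apply subspace_opp, subspace_scal; auto; apply span_subspace.
Qed.

(* If [v] is at positive distance from [span vs], the coefficients of [v] along a
   convergent sequence of [span (v :: vs)] form a Cauchy sequence. *)
Lemma span_closed vs : seq_closed (span vs).
Proof.
  induction vs as [|v vs IH].
  { intros u l Hu Hc. apply (converges_unique u); auto.
    apply converges_ext with (fun _ => bzero X); [intro; symmetry; apply Hu | apply converges_const]. }
  pose proof (span_subspace vs) as HS.
  destruct (classic (span vs v)) as [Hv|Hv].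
  { intros u l Hu Hc. exists (0, 0), l. rewrite vscal_0_l, vadd_0_l. split; auto.
    apply (IH u); auto. intro n. destruct (Hu n) as [a [w [Hw ->]]].
    apply (subspace_add _ HS); [apply (subspace_scal _ HS)|]; auto. }
  destruct (distance_pos (span vs) HS IH v Hv) as [d [Hd0 Hd]].
  intros u y Hu Hc. apply choice in Hu. destruct Hu as [a Ha]. apply choice in Ha. destruct Ha as [w Hw].
  destruct (C_cauchy_converges a) as [b Hb].
  { intros eps He. destruct (Hc (eps * d / 2)) as [N HN]; [nra|].
    exists N. intros n m Hn Hm. apply Rmult_lt_reg_r with d; auto.
    destruct (Hw n) as [Hwn Hun]. destruct (Hw m) as [Hwm Hum].
    assert (Cmod (Csub (a n) (a m)) * d <= nrm (u n -v u m)).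
    { rewrite Hun, Hum, vadd_sub_add, <- vscal_Csub. apply (span_coeff_bound vs); auto.
      apply (subspace_sub _ HS); auto. }
    pose proof (HN n Hn). pose proof (HN m Hm). pose proof (norm_sub_triang (u n) y (u m)).
    rewrite (norm_sub_comm y) in H2. lra. }
  assert (Hav : converges (fun n => vscal _ (a n) v) (vscal _ b v)).
  { intros eps He. destruct (Hb (eps / (nrm v + 1))) as [N HN].
    { pose proof (b_norm_nonneg _ v). apply Rdiv_lt_0_compat; lra. }
    exists N. intros n Hn. rewrite <- vscal_Csub, b_norm_scal.
    specialize (HN n Hn). pose proof (b_norm_nonneg _ v). pose proof (sqrt_pos (fst (Csub (a n) b) ^ 2 + snd (Csub (a n) b) ^ 2)).
    fold (Cmod (Csub (a n) b)) in H0.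
    apply Rle_lt_trans with (Cmod (Csub (a n) b) * (nrm v + 1)); [nra|].
    apply Rmult_lt_reg_r with (/ (nrm v + 1)); [apply Rinv_0_lt_compat; lra|].
    rewrite Rmult_assoc, Rinv_r, Rmult_1_r by lra. exact HN. }
  exists b, (y -v vscal _ b v). split.
  - apply (IH w).
    + intro n. apply Hw.
    + apply converges_ext with (fun n => u n -v vscal _ (a n) v).
      * intro n. destruct (Hw n) as [_ ->]. rewrite vadd_comm, vopp_add_cancel_l. reflexivity.
      * apply converges_add; auto. apply converges_opp; auto.
  - rewrite vadd_permute, vadd_opp_r, vadd_0_r. reflexivity.
Qed.
End FiniteDim.

(* If no finite list spans the kernel, the Riesz lemma yields a sequence of unit fixed
   points of [K], each at distance at least 1/2 from the span of its predecessors. *)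
Lemma I_minus_kernel_finite_dim {X : Banach} (K : X -> X) : bounded_linear K -> compact_op K ->
  exists vs : list X, forall x, I_minus K x = bzero X -> span vs x.
Proof.
  intros LK CK. set (N := fun x => I_minus K x = bzero X).
  assert (HN : subspace N) by (apply kernel_subspace, I_minus_linear; auto).
  assert (CN : seq_closed N) by (apply kernel_closed, I_minus_linear; auto).
  apply NNPP. intro Hn.
  assert (Hs : forall vs : list X, exists x, (forall v, In v vs -> N v) ->
      N x /\ nrm x <= 1 /\ forall w, span vs w -> 1 / 2 <= nrm (x -v w)).
  { intro vs. destruct (classic (forall v, In v vs -> N v)) as [Hall|Hnot].
    - assert (exists y, N y /\ ~ span vs y) as [y [Hy Hny]].
      { apply NNPP. intro H. apply Hn. exists vs. intros x Hx. apply NNPP. intro. apply H; eauto. }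
      destruct (riesz_lemma (span vs) (span_subspace vs) (span_closed vs) N y HN
        (span_incl N vs HN Hall) Hy Hny) as [x Hx].
      exists x. intros _. exact Hx.
    - exists (bzero X). intro; contradiction. }
  apply choice in Hs. destruct Hs as [f Hf].
  set (xs := fix xs (k : nat) : list X := match k with O => nil | S k => f (xs k) :: xs k end).
  assert (Hinv : forall k v, In v (xs k) -> N v).
  { induction k; simpl; [tauto|]. intros v [<-|Hin]; auto. apply Hf. apply IHk. }
  assert (HKu : forall k, K (f (xs k)) = f (xs k)).
  { intro k. destruct (Hf (xs k) (Hinv k)) as [H _]. symmetry. apply vsub_eq_0, H. }
  apply (compact_no_separated_images K CK (fun k => f (xs k))).
  - intro n. apply Hf, Hinv.
  - intros j k Hjk. rewrite !HKu. apply Hf; [apply Hinv|]. apply span_In.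
    induction Hjk; simpl; auto.
Qed.

(** * Riesz-Schauder decomposition *)

Section RieszSchauder.
Context {X : Banach} (K : X -> X) (LK : bounded_linear K) (CK : compact_op K).
Local Notation A := (I_minus K).
Let LA : bounded_linear A := I_minus_linear K LK.

Lemma iter_linear k : bounded_linear (Nat.iter k A).
Proof.
  induction k; simpl; [apply bounded_linear_id|].
  apply (bounded_linear_comp A); auto. apply b_norm_nonneg.
Qed.

(* [(I - K)^k = I - iter_defect k] with [iter_defect k] compact, so the results on
   [I - K] apply to its powers. *)
Definition iter_defect k (x : X) : X := x -v Nat.iter k A x.

Lemma I_minus_iter_defect k x : I_minus (iter_defect k) x = Nat.iter k A x.
Proof. apply vsub_sub_r. Qed.

Lemma iter_defect_linear k : bounded_linear (iter_defect k).
Proof. apply bounded_linear_sub; [apply bounded_linear_id | apply iter_linear]. Qed.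

Lemma iter_defect_compact k : compact_op (iter_defect k).
Proof.
  induction k.
  - replace (iter_defect 0) with (fun _ : X => bzero X); [apply compact_0|].
    apply functional_extensionality. intro x. symmetry. apply vadd_opp_r.
  - replace (iter_defect (S k)) with (fun x => iter_defect k x +v K (Nat.iter k A x)).
    + apply compact_add; auto. apply compact_comp_bounded; auto. apply iter_linear.
    + apply functional_extensionality. intro x. unfold iter_defect, I_minus. simpl.
      rewrite vopp_sub, <- vadd_assoc. f_equal. apply vadd_comm.
Qed.

Definition ker_pow k (x : X) : Prop := Nat.iter k A x = bzero X.
Definition ran_pow k (x : X) : Prop := exists z, x = Nat.iter k A z.

Lemma ker_pow_subspace k : subspace (ker_pow k).
Proof. apply kernel_subspace, iter_linear. Qed.
Lemma ker_pow_closed k : seq_closed (ker_pow k).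
Proof. apply kernel_closed, iter_linear. Qed.
Lemma ran_pow_subspace k : subspace (ran_pow k).
Proof. apply range_subspace, iter_linear. Qed.
Lemma ran_pow_closed k : seq_closed (ran_pow k).
Proof.
  intros u l Hu Hc.
  destruct (I_minus_range_closed (iter_defect k) (iter_defect_linear k) (iter_defect_compact k) u l)
    as [z Hz]; auto.
  - intro n. destruct (Hu n) as [z ->]. exists z. rewrite I_minus_iter_defect. reflexivity.
  - exists z. rewrite Hz, I_minus_iter_defect. reflexivity.
Qed.

Lemma ker_pow_mono m n x : (m <= n)%nat -> ker_pow m x -> ker_pow n x.
Proof.
  intros Hmn; induction Hmn; auto. intro Hx. unfold ker_pow; simpl.
  rewrite IHHmn by auto. apply linear_0; auto.
Qed.
Lemma ran_pow_anti m n x : (m <= n)%nat -> ran_pow n x -> ran_pow m x.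
Proof.
  intros Hmn; induction Hmn; auto. intros [z ->]. apply IHHmn.
  exists (A z). apply Nat.iter_succ_r.
Qed.
Lemma ker_pow_S_I_minus k x : ker_pow (S k) x -> ker_pow k (A x).
Proof. unfold ker_pow. rewrite Nat.iter_succ_r. auto. Qed.
Lemma ran_pow_I_minus k x : ran_pow k x -> ran_pow (S k) (A x).
Proof. intros [z ->]. exists z. reflexivity. Qed.

Lemma compact_diff_I_minus u w : K u -v K w = u -v (A u +v K w).
Proof. unfold I_minus. rewrite vopp_add, vadd_assoc, vsub_sub_r. reflexivity. Qed.

Lemma ascent : exists p, forall x, ker_pow (S p) x -> ker_pow p x.
Proof.
  apply NNPP. intro Hn.
  assert (Hs : forall k, exists x, ker_pow (S k) x /\ nrm x <= 1 /\
      forall v, ker_pow k v -> 1 / 2 <= nrm (x -v v)).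
  { intro k. assert (exists y, ker_pow (S k) y /\ ~ ker_pow k y) as [y [Hy Hny]].
    { apply NNPP. intro H. apply Hn. exists k. intros x Hx. apply NNPP. intro. apply H; eauto. }
    destruct (riesz_lemma (ker_pow k) (ker_pow_subspace k) (ker_pow_closed k) (ker_pow (S k)) y
      (ker_pow_subspace (S k)) (fun x => ker_pow_mono k (S k) x (Nat.le_succ_diag_r k)) Hy Hny) as [x Hx].
    exists x. tauto. }
  apply choice in Hs. destruct Hs as [x Hx].
  apply (compact_no_separated_images K CK x); [intro n; apply Hx|].
  intros j k Hjk. destruct (Hx k) as [Hk1 [_ Hk3]]. rewrite compact_diff_I_minus.
  apply Hk3, subspace_add; [apply ker_pow_subspace | apply ker_pow_S_I_minus; auto |].
  rewrite <- (vsub_sub_r (x j) (K (x j))). fold (A (x j)).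
  apply subspace_sub; [apply ker_pow_subspace | |].
  - apply (ker_pow_mono (S j)); [lia | apply Hx].
  - apply (ker_pow_mono j); [lia|]. apply ker_pow_S_I_minus, Hx.
Qed.

Lemma descent : exists q, forall x, ran_pow q x -> ran_pow (S q) x.
Proof.
  apply NNPP. intro Hn.
  assert (Hs : forall k, exists x, ran_pow k x /\ nrm x <= 1 /\
      forall v, ran_pow (S k) v -> 1 / 2 <= nrm (x -v v)).
  { intro k. assert (exists y, ran_pow k y /\ ~ ran_pow (S k) y) as [y [Hy Hny]].
    { apply NNPP. intro H. apply Hn. exists k. intros x Hx. apply NNPP. intro. apply H; eauto. }
    destruct (riesz_lemma (ran_pow (S k)) (ran_pow_subspace (S k)) (ran_pow_closed (S k)) (ran_pow k) y
      (ran_pow_subspace k) (fun x => ran_pow_anti k (S k) x (Nat.le_succ_diag_r k)) Hy Hny) as [x Hx].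
    exists x. tauto. }
  apply choice in Hs. destruct Hs as [x Hx].
  apply (compact_no_separated_images K CK x); [intro n; apply Hx|].
  intros j k Hjk. destruct (Hx j) as [Hj1 [_ Hj3]]. rewrite norm_sub_comm, compact_diff_I_minus.
  apply Hj3, subspace_add; [apply ran_pow_subspace | apply ran_pow_I_minus; auto |].
  rewrite <- (vsub_sub_r (x k) (K (x k))). fold (A (x k)).
  apply subspace_sub; [apply ran_pow_subspace | |].
  - apply (ran_pow_anti (S j) k); [lia | apply Hx].
  - apply (ran_pow_anti (S j) (S k)); [lia|]. apply ran_pow_I_minus, Hx.
Qed.

Lemma ker_pow_stable p : (forall x, ker_pow (S p) x -> ker_pow p x) ->
  forall m x, ker_pow m x -> ker_pow p x.
Proof.
  intros Hp m x. destruct (Nat.le_gt_cases m p) as [Hmp|Hpm]; [apply ker_pow_mono; auto|].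
  replace m with (p + (m - p))%nat by lia. generalize (m - p)%nat as j. clear Hpm.
  induction j as [|j IH]; intro Hx; [rewrite Nat.add_0_r in Hx; auto|].
  apply IH. unfold ker_pow in *. replace (p + S j)%nat with (S p + j)%nat in Hx by lia.
  rewrite Nat.iter_add in *. apply Hp, Hx.
Qed.

Lemma ran_pow_stable q : (forall x, ran_pow q x -> ran_pow (S q) x) ->
  forall m x, ran_pow q x -> ran_pow m x.
Proof.
  intros Hq m x. destruct (Nat.le_gt_cases m q) as [Hmq|Hqm]; [apply ran_pow_anti; auto|].
  replace m with (q + (m - q))%nat by lia. generalize (m - q)%nat as j. clear Hqm.
  induction j as [|j IH]; intro Hx; [rewrite Nat.add_0_r; auto|].
  destruct (IH Hx) as [z ->].
  destruct (Hq (Nat.iter q A z) (ex_intro _ z eq_refl)) as [w Hw].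
  exists w. rewrite (Nat.add_comm q j), Nat.iter_add, Hw, <- Nat.iter_add. f_equal. lia.
Qed.

Lemma stable_index : exists p,
  (forall m x, ker_pow m x -> ker_pow p x) /\ (forall m x, ran_pow p x -> ran_pow m x).
Proof.
  destruct ascent as [p Hp]. destruct descent as [q Hq]. exists (p + q)%nat. split.
  - intros m x Hx. apply (ker_pow_mono p); [lia|]. apply (ker_pow_stable p Hp m), Hx.
  - intros m x Hx. apply (ran_pow_stable q Hq m), (ran_pow_anti q (p + q)); [lia | exact Hx].
Qed.

Section RieszDecomposition.
Context (p : nat) (HN : forall m x, ker_pow m x -> ker_pow p x)
  (HR : forall m x, ran_pow p x -> ran_pow m x).

Lemma ker_ran_pow_trivial r : ran_pow p r -> ker_pow p r -> r = bzero X.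
Proof.
  intros [z ->] Hr. apply (HN (p + p)). unfold ker_pow in *. rewrite Nat.iter_add. exact Hr.
Qed.

Lemma riesz_decomposition x : exists r, ran_pow p r /\ ker_pow p (x -v r).
Proof.
  destruct (HR (p + p) (Nat.iter p A x) (ex_intro _ x eq_refl)) as [z Hz].
  rewrite Nat.iter_add in Hz. exists (Nat.iter p A z). split; [exists z; auto|].
  unfold ker_pow. rewrite linear_sub, Hz by apply iter_linear. apply vadd_opp_r.
Qed.

Definition riesz_proj (x : X) : X :=
  proj1_sig (constructive_indefinite_description _ (riesz_decomposition x)).

Lemma riesz_proj_spec x : ran_pow p (riesz_proj x) /\ ker_pow p (x -v riesz_proj x).
Proof. exact (proj2_sig (constructive_indefinite_description _ (riesz_decomposition x))). Qed.

Lemma riesz_proj_eq x r : ran_pow p r -> ker_pow p (x -v r) -> riesz_proj x = r.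
Proof.
  intros Hr Hk. destruct (riesz_proj_spec x) as [Hr' Hk']. apply vsub_eq_0, ker_ran_pow_trivial.
  - apply subspace_sub; auto. apply ran_pow_subspace.
  - rewrite <- (vsub_sub_l x (riesz_proj x) r). apply subspace_sub; auto. apply ker_pow_subspace.
Qed.

Lemma riesz_proj_linear : bounded_linear riesz_proj.
Proof.
  split; [|split].
  - intros x y. destruct (riesz_proj_spec x) as [Hx1 Hx2]. destruct (riesz_proj_spec y) as [Hy1 Hy2].
    apply riesz_proj_eq.
    + apply subspace_add; auto. apply ran_pow_subspace.
    + rewrite vadd_sub_add. apply subspace_add; auto. apply ker_pow_subspace.
  - intros c x. destruct (riesz_proj_spec x) as [Hx1 Hx2]. apply riesz_proj_eq.
    + apply subspace_scal; auto. apply ran_pow_subspace.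
    + rewrite <- vscal_sub. apply subspace_scal; auto. apply ker_pow_subspace.
  - destruct (I_minus_bounded_below (iter_defect p) (iter_defect_linear p) (iter_defect_compact p)
      (ran_pow p) (ran_pow_subspace p) (ran_pow_closed p)) as [c [Hc Hcb]].
    { intros l Hl Hz. rewrite I_minus_iter_defect in Hz. apply ker_ran_pow_trivial; auto. }
    destruct (linear_bound (Nat.iter p A) (iter_linear p)) as [M [HM HMb]].
    exists (c * M). intro x. destruct (riesz_proj_spec x) as [Hx1 Hx2].
    eapply Rle_trans; [apply Hcb; auto|]. rewrite I_minus_iter_defect.
    replace (Nat.iter p A (riesz_proj x)) with (Nat.iter p A x).
    + rewrite Rmult_assoc. apply Rmult_le_compat_l; [lra | apply HMb].
    + symmetry. apply vsub_eq_0. unfold ker_pow in Hx2. rewrite linear_sub in Hx2 by apply iter_linear.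
      rewrite <- vopp_sub, Hx2. apply vopp_0.
Qed.

Lemma I_minus_ran_pow_injective s : ran_pow p s -> A s = bzero X -> s = bzero X.
Proof. intros Hs HAs. apply ker_ran_pow_trivial; auto. apply (HN 1). exact HAs. Qed.

Lemma I_minus_solve_proj x : exists s, ran_pow p s /\ A s = riesz_proj x.
Proof.
  destruct (HR (S p) (riesz_proj x) (proj1 (riesz_proj_spec x))) as [w Hw].
  exists (Nat.iter p A w). split; [exists w; auto | symmetry; exact Hw].
Qed.

Definition riesz_inverse (x : X) : X :=
  proj1_sig (constructive_indefinite_description _ (I_minus_solve_proj x)).

Lemma riesz_inverse_spec x : ran_pow p (riesz_inverse x) /\ A (riesz_inverse x) = riesz_proj x.
Proof. exact (proj2_sig (constructive_indefinite_description _ (I_minus_solve_proj x))). Qed.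

Lemma riesz_inverse_eq x s : ran_pow p s -> A s = riesz_proj x -> riesz_inverse x = s.
Proof.
  intros Hs HAs. destruct (riesz_inverse_spec x) as [H1 H2]. apply vsub_eq_0, I_minus_ran_pow_injective.
  - apply subspace_sub; auto. apply ran_pow_subspace.
  - rewrite linear_sub, H2, HAs by auto. apply vadd_opp_r.
Qed.

Lemma riesz_inverse_linear : bounded_linear riesz_inverse.
Proof.
  split; [|split].
  - intros x y. destruct (riesz_inverse_spec x) as [Hx1 Hx2]. destruct (riesz_inverse_spec y) as [Hy1 Hy2].
    apply riesz_inverse_eq.
    + apply subspace_add; auto. apply ran_pow_subspace.
    + rewrite (linear_add A), Hx2, Hy2 by auto. symmetry. apply linear_add, riesz_proj_linear.
  - intros c x. destruct (riesz_inverse_spec x) as [Hx1 Hx2]. apply riesz_inverse_eq.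
    + apply subspace_scal; auto. apply ran_pow_subspace.
    + rewrite (linear_scal A), Hx2 by auto. symmetry. apply linear_scal, riesz_proj_linear.
  - destruct (I_minus_bounded_below K LK CK (ran_pow p) (ran_pow_subspace p) (ran_pow_closed p))
      as [c [Hc Hcb]].
    { exact I_minus_ran_pow_injective. }
    destruct (linear_bound riesz_proj riesz_proj_linear) as [M [HM HMb]].
    exists (c * M). intro x. destruct (riesz_inverse_spec x) as [Hx1 Hx2].
    eapply Rle_trans; [apply Hcb; auto|]. rewrite Hx2, Rmult_assoc.
    apply Rmult_le_compat_l; [lra | apply HMb].
Qed.

Lemma riesz_inverse_I_minus x : riesz_inverse (A x) = riesz_proj x.
Proof.
  destruct (riesz_proj_spec x) as [H1 H2]. apply riesz_inverse_eq; auto. symmetry.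
  apply riesz_proj_eq.
  - apply (ran_pow_anti p (S p)); [lia|]. apply ran_pow_I_minus; auto.
  - rewrite <- linear_sub by auto. apply ker_pow_S_I_minus, (ker_pow_mono p); auto.
Qed.
End RieszDecomposition.

(* Riesz decomposition [X = ker (I - K)^p (+) ran (I - K)^p] at the stable index [p]:
   [I - K] is invertible on the range, and the kernel is finite-dimensional. *)
Lemma I_minus_left_regularizer : exists B Phi : X -> X,
  bounded_linear B /\ bounded_linear Phi /\ finite_rank Phi /\ forall x, B (A x) = x -v Phi x.
Proof.
  destruct stable_index as [p [HN HR]].
  destruct (I_minus_kernel_finite_dim (iter_defect p) (iter_defect_linear p) (iter_defect_compact p))
    as [vs Hvs].
  exists (riesz_inverse p HR), (fun x => x -v riesz_proj p HR x). split; [|split; [|split]].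
  - apply riesz_inverse_linear; auto.
  - apply bounded_linear_sub; [apply bounded_linear_id | apply riesz_proj_linear; auto].
  - exists vs. intro x. apply span_lincomb, Hvs. rewrite I_minus_iter_defect. apply riesz_proj_spec.
  - intro x. rewrite (riesz_inverse_I_minus p HN). symmetry. apply vsub_sub_r.
Qed.
End RieszSchauder.

(** * Equivalence after extension *)

Section DirectSum.
Context {A B : Banach}.

Lemma l2sum_norm_nonneg (z : l2sum A B) : 0 <= vnorm _ z.
Proof. apply sqrt_pos. Qed.

Lemma l2sum_norm (a : A) (b : B) :
  vnorm (l2sum A B) (a, b) = sqrt (vnorm _ a ^ 2 + vnorm _ b ^ 2).
Proof. reflexivity. Qed.

Lemma l2sum_norm_fst (a : A) (b : B) : vnorm _ a <= vnorm (l2sum A B) (a, b).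
Proof.
  rewrite l2sum_norm. rewrite <- (sqrt_pow2 (vnorm _ a)) at 1 by apply b_norm_nonneg.
  apply sqrt_le_1_alt. pose proof (pow2_ge_0 (vnorm _ b)). lra.
Qed.
Lemma l2sum_norm_snd (a : A) (b : B) : vnorm _ b <= vnorm (l2sum A B) (a, b).
Proof.
  rewrite l2sum_norm. rewrite <- (sqrt_pow2 (vnorm _ b)) at 1 by apply b_norm_nonneg.
  apply sqrt_le_1_alt. pose proof (pow2_ge_0 (vnorm _ a)). lra.
Qed.

Lemma fst_linear : bounded_linear (fun z : l2sum A B => fst z).
Proof. split; [|split]; auto. exists 1. intros [a b]. rewrite Rmult_1_l. apply l2sum_norm_fst. Qed.
Lemma snd_linear : bounded_linear (fun z : l2sum A B => snd z).
Proof. split; [|split]; auto. exists 1. intros [a b]. rewrite Rmult_1_l. apply l2sum_norm_snd. Qed.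

Lemma inl_linear : bounded_linear (fun a : A => (a, bzero B) : l2sum A B).
Proof.
  split; [|split].
  - intros. simpl. rewrite vadd_0_r. reflexivity.
  - intros. simpl. rewrite vscal_0_r. reflexivity.
  - exists 1. intro a. rewrite l2sum_norm, norm_0, Rmult_1_l.
    replace (vnorm _ a ^ 2 + 0 ^ 2) with (vnorm _ a ^ 2) by ring.
    rewrite sqrt_pow2 by apply b_norm_nonneg. lra.
Qed.
Lemma inr_linear : bounded_linear (fun b : B => (bzero A, b) : l2sum A B).
Proof.
  split; [|split].
  - intros. simpl. rewrite vadd_0_r. reflexivity.
  - intros. simpl. rewrite vscal_0_r. reflexivity.
  - exists 1. intro b. rewrite l2sum_norm, norm_0, Rmult_1_l.
    replace (0 ^ 2 + vnorm _ b ^ 2) with (vnorm _ b ^ 2) by ring.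
    rewrite sqrt_pow2 by apply b_norm_nonneg. lra.
Qed.
End DirectSum.

(* With [E^-1 = P], [F^-1 = Q] and [F (x, 0) = (a, b)]:
   [(T x, 0) = E (S a, 0) + E (0, b)], where [b = snd (P (T x, 0))], and evaluating the
   defining identity at [Q (0, b)] shows [fst (E (0, b)) = T (fst (Q (0, b)))]. *)
Lemma EAE_factorization {X Y : Banach} (T : X -> X) (S : Y -> Y) :
  bounded_linear S -> EAE T S ->
  exists (G : Y -> X) (H : X -> Y) (M : X -> X),
    bounded_linear G /\ bounded_linear H /\ bounded_linear M /\
    forall x, T x = G (S (H x)) +v T (M (T x)).
Proof.
  intros LS [X' [Y' [E [F [[LE [P [LP [PE EP]]]] [[LF [Q [LQ [QF FQ]]]] HTS]]]]]].
  exists (fun y => fst (E ((y, bzero Y') : l2sum Y Y'))),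
    (fun x => fst (F ((x, bzero X') : l2sum X X'))),
    (fun z => fst (Q ((bzero Y, snd (P ((z, bzero X') : l2sum X X'))) : l2sum Y Y'))).
  pose proof (@l2sum_norm_nonneg X X') as NX. pose proof (@l2sum_norm_nonneg Y Y') as NY.
  split; [|split; [|split]].
  - apply (bounded_linear_comp _ _ NX fst_linear), (bounded_linear_comp _ _ NY LE inl_linear).
  - apply (bounded_linear_comp _ _ NY fst_linear), (bounded_linear_comp _ _ NX LF inl_linear).
  - apply (bounded_linear_comp _ _ NX fst_linear), (bounded_linear_comp _ _ NY LQ).
    apply (bounded_linear_comp _ _ (b_norm_nonneg _) inr_linear), (bounded_linear_comp _ _ NY snd_linear).
    apply (bounded_linear_comp _ _ NX LP inl_linear).
  - intro x. destruct (F ((x, bzero X') : l2sum X X')) as [a b] eqn:Hab. simpl.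
    pose proof (HTS x (bzero X')) as Hx. rewrite Hab in Hx. simpl in Hx.
    assert (Hb : snd (P ((T x, bzero X') : l2sum X X')) = b) by (rewrite Hx, PE; reflexivity).
    assert (HQ : T (fst (Q ((bzero Y, b) : l2sum Y Y'))) = fst (E ((bzero Y, b) : l2sum Y Y'))).
    { destruct (Q ((bzero Y, b) : l2sum Y Y')) as [c c'] eqn:Hc.
      pose proof (HTS c c') as Hcc. rewrite <- Hc, FQ in Hcc. simpl in Hcc.
      rewrite linear_0 in Hcc by auto. rewrite <- Hcc. reflexivity. }
    rewrite Hb, HQ.
    change (T x) with (fst ((T x, bzero X') : l2sum X X')). rewrite Hx.
    replace ((S a, b) : l2sum Y Y') with
      (vadd (l2sum Y Y') ((S a, bzero Y') : l2sum Y Y') ((bzero Y, b) : l2sum Y Y'))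
      by (simpl; rewrite vadd_0_r, vadd_0_l; reflexivity).
    destruct LE as [LE1 _]. rewrite LE1. reflexivity.
Qed.

Theorem proposition2p2 (X Y : Banach) (T : X -> X) (S : Y -> Y)
  (hT : bounded_linear T) (hS : bounded_linear S)
  (cT : compact_op T) (cS : compact_op S)
  (hEAE : EAE T S) :
  exists (G : Y -> X) (H : X -> Y) (R0 : X -> X),
    bounded_linear G /\ bounded_linear H /\ bounded_linear R0 /\
    finite_rank R0 /\
    forall x : X, T x = vadd _ (G (S (H x))) (R0 x).
Proof.
  destruct (EAE_factorization T S hS hEAE) as [G [H [M [LG [LH [LM HTM]]]]]].
  assert (LK : bounded_linear (fun z => T (M z)))
    by (apply bounded_linear_comp; auto; apply b_norm_nonneg).
  destruct (I_minus_left_regularizer (fun z => T (M z)) LK (compact_comp_bounded T M hT LM cT))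
    as [B [Phi [LB [LPhi [[vs Hvs] HBP]]]]].
  exists (fun y => B (G y)), H, (fun x => Phi (T x)). split; [|split; [|split; [|split]]].
  - apply bounded_linear_comp; auto. apply b_norm_nonneg.
  - exact LH.
  - apply bounded_linear_comp; auto. apply b_norm_nonneg.
  - exists vs. intro x. apply Hvs.
  - intro x. assert (HA : I_minus (fun z => T (M z)) (T x) = G (S (H x))).
    { unfold I_minus. rewrite HTM at 1. rewrite <- vadd_assoc, vadd_opp_r, vadd_0_r. reflexivity. }
    rewrite <- HA, HBP. symmetry. apply vsub_add_r.
Qed.
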